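(* For Lebesgue-almost every $x\in(0,3)$, $k_x(\varepsilon)\sim\log_{2/3}|\varepsilon|$ as $\varepsilon\to0$, i.e. $k_x(\varepsilon)/\log_{2/3}|\varepsilon|\to1$.
   Context: Let $T=T_{2/3}:[0,3]\to[0,3]$ be given by $T(x)=\frac32(x+1)$ for $0\le x<1$ and $T(x)=\frac32(x-1)$ for $1\le x\le3$ (so $T(1)=0$). For $x\in[0,3]$ and $n\ge0$ let $\delta_n(x)=\mathbb 1\{T^n(x)<1\}$. For $x\in[0,3]$ and real $\varepsilon\ne0$ with $x+\varepsilon\in[0,3]$, let $k_x(\varepsilon)=\min\{n\ge0:\delta_n(x)\neq\delta_n(x+\varepsilon)\}$. *)

From HB Require Import structures.
From mathcomp Require Import all_boot all_order all_algebra.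
From mathcomp Require Import all_classical all_reals all_analysis.
Set Implicit Arguments. Unset Strict Implicit. Unset Printing Implicit Defensive.
Import Order.TTheory GRing.Theory Num.Theory.
Import numFieldNormedType.Exports.
Local Open Scope ring_scope.

Definition Tmap (R : realType) (x : R) : R :=
  if x < 1 then 3 / 2 * (x + 1) else 3 / 2 * (x - 1).

Definition delta (R : realType) (n : nat) (x : R) : bool := iter n (@Tmap R) x < 1.

(* k_x(eps) = min{n : delta_n(x) <> delta_n(x+eps)}; 0 by convention if no
   such n exists (this never happens for eps <> 0 with x, x+eps in [0,3]). *)
Definition kx (R : realType) (x eps : R) : nat :=
  match pselect (exists n, delta n x != delta n (x + eps)) with
  | left h => ex_minn h
  | right _ => 0%N
  end.

From HB Require Import structures.
From mathcomp Require Import all_boot all_order all_algebra.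
From mathcomp Require Import all_classical all_reals all_analysis.
From mathcomp Require Import ring lra.
Set Implicit Arguments. Unset Strict Implicit. Unset Printing Implicit Defensive.
Import Order.TTheory GRing.Theory Num.Theory.
Import numFieldNormedType.Exports.
Local Open Scope ring_scope.
Local Open Scope classical_set_scope.

(* While x and x + eps share their itinerary, T^n expands their distance by
   (3/2)^n; at the first disagreement time k = k_x(eps) they lie on either
   side of 1, so (3/2)^k |eps| <= 3 and |T^k x - 1| <= (3/2)^k |eps|.  The
   first inequality gives k ln(3/2) <= -ln|eps| + ln 3.  The second gives the
   reverse bound once |T^k x - 1| > rho^k for large k, which holds for a.e. x
   and every rho < 1 by Borel-Cantelli, because Leb{x : |T^j x - 1| <= r} <= 6 r
   for all j.  That estimate comes from the T-invariant density
   h(y) = sum_n (2/3)^n 1[y >= T^n 0], which takes its values in [1, 3]. *)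

Lemma bernoulli_le_exprn (R : realDomainType) (a : R) n :
  1 <= a -> 1 + n%:R * (a - 1) <= a ^+ n.
Proof.
move=> a1; elim: n => [|n IH]; first by rewrite mul0r addr0 expr0.
have : 0 <= n%:R * (a - 1) by rewrite mulr_ge0 // subr_ge0.
by rewrite exprS -[n.+1%:R]natr1; nra.
Qed.

Section first_disagreement.
Variable R : realType.
Implicit Types (x y eps : R) (n k : nat).
Local Notation T := (@Tmap R).

Lemma Tmap_itv x : 0 <= x <= 3 -> 0 <= T x <= 3.
Proof. by move=> /andP[? ?]; rewrite /Tmap; case: ifP => ?; apply/andP; split; lra. Qed.

Lemma iter_Tmap_itv n x : 0 <= x <= 3 -> 0 <= iter n T x <= 3.
Proof. by move=> hx; elim: n => //= n IH; apply: Tmap_itv. Qed.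

Lemma Tmap_sub x y : (x < 1) = (y < 1) -> T y - T x = 3 / 2 * (y - x).
Proof. by rewrite /Tmap => ->; case: ifP => _; lra. Qed.

Lemma iter_Tmap_sub n x y : (forall m, (m < n)%N -> delta m x = delta m y) ->
  iter n T y - iter n T x = (3 / 2) ^+ n * (y - x).
Proof.
elim: n => [|n IH] same; first by rewrite expr0 mul1r.
rewrite /= Tmap_sub; last exact: same.
by rewrite IH => [|m /ltnW]; [rewrite exprS mulrA | exact: same].
Qed.

Section nearby_pair.
Variables x eps : R.
Hypotheses (x_itv : 0 <= x <= 3) (xe_itv : 0 <= x + eps <= 3) (eps_neq0 : eps != 0).

Lemma same_itinerary_expansion_le3 n : (forall m, (m < n)%N -> delta m x = delta m (x + eps)) ->
  (3 / 2) ^+ n * `|eps| <= 3.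
Proof.
move=> same; have := iter_Tmap_sub same; rewrite addrAC subrr add0r.
have := iter_Tmap_itv n x_itv; have := iter_Tmap_itv n xe_itv.
move: (iter n T x) (iter n T (x + eps)) => a b /andP[? ?] /andP[? ?] ab.
have -> : (3 / 2) ^+ n * `|eps| = `|b - a|.
  by rewrite ab normrM [`|_ ^+ n|]ger0_norm // exprn_ge0 //; lra.
by rewrite ler_norml; lra.
Qed.

Lemma itinerary_separates : exists n, delta n x != delta n (x + eps).
Proof.
apply: contrapT => same; pose n := Num.Def.archi_bound (6 / `|eps|).
have eps_gt0 : 0 < `|eps| by rewrite normr_gt0.
have : 6 / `|eps| < n%:R by apply: archi_boundP; rewrite divr_ge0 //; lra.
rewrite ltr_pdivrMr // => n_large.
have : (3 / 2) ^+ n * `|eps| <= 3.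
  apply: same_itinerary_expansion_le3 => m _; apply/eqP; apply: contra_notT same.
  by exists m.
have : 1 <= 3 / 2 :> R by lra.
by move/(bernoulli_le_exprn n); nra.
Qed.

Lemma kx_min m : (m < kx x eps)%N -> delta m x = delta m (x + eps).
Proof.
rewrite /kx; case: pselect => [sep|]; last by move: itinerary_separates.
case: (ex_minnP sep) => k _ min_k lt_m_k; apply/eqP; apply: contraTT lt_m_k.
by rewrite -leqNgt => /min_k.
Qed.

Lemma kx_separates : delta (kx x eps) x != delta (kx x eps) (x + eps).
Proof.
by rewrite /kx; case: pselect => [sep|]; [case: (ex_minnP sep)|move: itinerary_separates].
Qed.

Lemma kx_expansion_le3 : (3 / 2) ^+ kx x eps * `|eps| <= 3.
Proof. exact/same_itinerary_expansion_le3/kx_min. Qed.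

Lemma kx_dist1_le : `|iter (kx x eps) T x - 1| <= (3 / 2) ^+ kx x eps * `|eps|.
Proof.
have := iter_Tmap_sub kx_min; have := kx_separates; rewrite /delta addrAC subrr add0r.
move: (iter _ T x) (iter _ T (x + eps)) => a b sep ab.
have -> : (3 / 2) ^+ kx x eps * `|eps| = `|b - a|.
  by rewrite ab normrM [`|_ ^+ _|]ger0_norm // exprn_ge0 //; lra.
case: (ltrP a 1) (ltrP b 1) sep => ? [] ? //= _.
  by rewrite [X in _ <= X]ger0_norm ?ler_norml; lra.
by rewrite [X in _ <= X]ler0_norm ?ler_norml; lra.
Qed.

End nearby_pair.
End first_disagreement.

(* A pair (a, b) stands for the closed segment [a, b], empty when b < a. *)
Section segment.
Variable R : realDomainType.
Implicit Types (I J : R * R) (x : R).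

Definition in_seg x I := I.1 <= x <= I.2.
Definition seg_len I : R := Num.max 0 (I.2 - I.1).
Definition seg_meet I J : R * R := (Num.max I.1 J.1, Num.min I.2 J.2).
Definition seg_aff (a b : R) I : R * R := (a * I.1 + b, a * I.2 + b).
Definition overlap I J := seg_len (seg_meet I J).

Lemma seg_len_ge0 I : 0 <= seg_len I.
Proof. by rewrite le_max lexx. Qed.

Lemma seg_len_empty I : I.2 <= I.1 -> seg_len I = 0.
Proof. by move=> I21; rewrite /seg_len max_l // subr_le0. Qed.

Lemma seg_meetA I J K : seg_meet (seg_meet I J) K = seg_meet I (seg_meet J K).
Proof. by rewrite /seg_meet /= maxA minA. Qed.

Lemma in_seg_meet x I J : in_seg x (seg_meet I J) = in_seg x I && in_seg x J.
Proof. by rewrite /in_seg ge_max le_min -!andbA; do !bool_congr. Qed.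

Section affine.
Variables (a b : R).
Hypothesis a_gt0 : 0 < a.

Lemma seg_meet_aff I J : seg_meet (seg_aff a b I) (seg_aff a b J) = seg_aff a b (seg_meet I J).
Proof.
by rewrite /seg_meet /seg_aff /= -addr_maxl -addr_minl -maxr_pMr -?minr_pMr ?ltW.
Qed.

Lemma seg_len_aff I : seg_len (seg_aff a b I) = a * seg_len I.
Proof.
by rewrite /seg_len /= opprD addrACA subrr addr0 -mulrBr maxr_pMr ?ltW // mulr0.
Qed.

End affine.

Lemma overlap_ge0 I J : 0 <= overlap I J.
Proof. exact: seg_len_ge0. Qed.

Lemma overlap_le_len I J : overlap I J <= seg_len I.
Proof. by apply: le_max2 => //; apply: lerB; rewrite ?ge_min ?le_max lexx. Qed.

Lemma overlap_subr I J J' : J'.1 <= J.1 -> J.2 <= J'.2 -> overlap I J <= overlap I J'.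
Proof.
move=> J1 J2; apply: le_max2 => //; apply: lerB; [apply: le_min2|apply: le_max2] => //.
Qed.

End segment.

Section invariant_density.
Variable R : realType.
Implicit Types (I : R * R) (L : seq (R * R)) (c x : R) (n N j : nat).
Local Notation T := (@Tmap R).

Definition preimL I := seg_meet (seg_aff (2 / 3) (-1) I) (0, 1).
Definition preimR I := seg_meet (seg_aff (2 / 3) 1 I) (1, 3).

Lemma in_seg_preim I x : 0 <= x <= 3 -> in_seg (T x) I ->
  in_seg x (preimL I) || in_seg x (preimR I).
Proof.
move=> /andP[x0 x3]; rewrite /preimL /preimR !in_seg_meet /in_seg /Tmap /=.
case: ifP => x1 /andP[aTx Txb]; apply/orP; [left|right];
  by apply/andP; split; apply/andP; split; lra.
Qed.

Lemma overlap_preim I c : 0 <= c ->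
  overlap (preimL I) (c, 3) + overlap (preimR I) (c, 3) =
  2 / 3 * overlap I (T c, 3) + (if c < 1 then 2 / 3 * overlap I (0, 3) else 0).
Proof.
move=> c0; have a_gt0 : 0 < 2 / 3 :> R by lra.
rewrite /overlap /preimL /preimR !seg_meetA; case: ltrP => c1.
  have -> : seg_meet (0, 1) (c, 3) = seg_aff (2 / 3) (-1) (T c, 3).
    by rewrite /seg_meet /seg_aff /Tmap c1 /= max_r // min_l; [congr pair|]; lra.
  have -> : seg_meet (1, 3) (c, 3) = seg_aff (2 / 3) 1 (0, 3).
    by rewrite /seg_meet /seg_aff /= max_l ?minxx; [congr pair|]; lra.
  by rewrite !seg_meet_aff // !seg_len_aff // addrC.
rewrite seg_len_empty /=; last first.
  apply: (le_trans _ (le_trans c1 _)); first by rewrite !ge_min lexx !orbT.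
  by rewrite !le_max lexx !orbT.
have -> : seg_meet (1, 3) (c, 3) = seg_aff (2 / 3) 1 (T c, 3).
  by rewrite /seg_meet /seg_aff /Tmap ltNge c1 /= max_r ?minxx; [congr pair|]; lra.
by rewrite seg_meet_aff // seg_len_aff // addr0 add0r.
Qed.

Definition orbit0 n : R := iter n T 0.

(* The integral over I of the truncation
   h_N(y) = sum_(n < N) (2/3)^n 1[y >= T^n 0] of the invariant density. *)
Definition dens_len N I := \sum_(n < N) (2 / 3) ^+ n * overlap I (orbit0 n, 3).

Lemma orbit0_itv n : 0 <= orbit0 n <= 3.
Proof. by apply: iter_Tmap_itv; rewrite lexx /=; lra. Qed.

Lemma branch_weights_le1 N :
  \sum_(n < N) (if orbit0 n < 1 then (2 / 3 : R) ^+ n.+1 else 0) <= 1.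
Proof.
have telescope M : \sum_(n < M) (if orbit0 n < 1 then (2 / 3 : R) ^+ n.+1 else 0)
    + (2 / 3) ^+ M * (1 - orbit0 M / 3) = 1.
  elim: M => [|M IH]; first by rewrite big_ord0 /orbit0 /=; lra.
  rewrite big_ord_recr -[RHS]IH -addrA; congr (_ + _).
  by rewrite /orbit0 iterS -/(orbit0 M) /Tmap exprS; case: ifP => _; lra.
have /andP[_ ?] := orbit0_itv N.
rewrite -[leRHS](telescope N) lerDl mulr_ge0 ?exprn_ge0 //; lra.
Qed.

Lemma dens_len_preim N I :
  dens_len N (preimL I) + dens_len N (preimR I) <= dens_len N.+1 I.
Proof.
have step n : (2 / 3) ^+ n * overlap (preimL I) (orbit0 n, 3)
      + (2 / 3) ^+ n * overlap (preimR I) (orbit0 n, 3)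
    = (2 / 3) ^+ n.+1 * overlap I (orbit0 n.+1, 3)
      + (if orbit0 n < 1 then (2 / 3) ^+ n.+1 else 0) * overlap I (0, 3).
  have /andP[c0 _] := orbit0_itv n.
  rewrite -mulrDr overlap_preim // mulrDr exprSr mulrA; congr (_ + _).
  by case: ifP => _; rewrite ?mulr0 ?mul0r ?mulrA.
rewrite /dens_len -big_split (eq_bigr _ (fun (n : 'I_N) _ => step n)) big_split /=.
rewrite big_ord_recl expr0 mul1r addrC; apply: lerD; last exact: lexx.
by rewrite -mulr_suml ler_piMl ?overlap_ge0 ?branch_weights_le1.
Qed.

Lemma dens_len1 I : dens_len 1 I = overlap I (0, 3).
Proof. by rewrite /dens_len big_ord1 expr0 mul1r. Qed.

Lemma dens_len_le N I : dens_len N I <= 3 * overlap I (0, 3).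
Proof.
apply: (@le_trans _ _ (\sum_(n < N) (2 / 3) ^+ n * overlap I (0, 3))).
  apply: ler_sum => n _; apply: ler_wpM2l; first by rewrite exprn_ge0 //; lra.
  by have /andP[c0 _] := orbit0_itv n; apply: overlap_subr.
rewrite -mulr_suml; apply: ler_wpM2r; first exact: overlap_ge0.
have -> : \sum_(n < N) (2 / 3 : R) ^+ n = series (geometric 1 (2 / 3)) N.
  by rewrite /series /= big_mkord; apply: eq_bigr => n _; rewrite mul1r.
apply: le_trans (geometric_le_lim _ _ _ _) _; rewrite ?ger0_norm; try lra.
by have -> : 1 / (1 - 2 / 3) = 3 :> R by field.
Qed.

Definition preim_segs L := map preimL L ++ map preimR L.

Lemma sum_dens_len_preim N L :
  \sum_(I <- preim_segs L) dens_len N I <= \sum_(I <- L) dens_len N.+1 I.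
Proof.
by rewrite big_cat !big_map /= -big_split; apply: ler_sum => I _; apply: dens_len_preim.
Qed.

Lemma sum_overlap_iter_preim j L :
  \sum_(I <- iter j preim_segs L) overlap I (0, 3) <= 3 * \sum_(I <- L) overlap I (0, 3).
Proof.
have iter_le N k L' : \sum_(I <- iter k preim_segs L') dens_len N I
    <= \sum_(I <- L') dens_len (k + N) I.
  elim: k N L' => [//|k IH] N L'; rewrite iterSr.
  by apply: le_trans (IH _ _) _; apply: sum_dens_len_preim.
under eq_bigr do rewrite -dens_len1.
apply: le_trans (iter_le _ _ _) _; rewrite mulr_sumr.
by apply: ler_sum => I _; apply: dens_len_le.
Qed.

Lemma has_in_seg_iter_preim j L x : 0 <= x <= 3 ->
  has (in_seg (iter j T x)) L -> has (in_seg x) (iter j preim_segs L).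
Proof.
elim: j x => [//|j IH] x x_itv; rewrite iterSr iterS => /(IH _ (Tmap_itv x_itv)).
move=> /hasP[I IL /(in_seg_preim x_itv) /orP[xI|xI]]; apply/hasP.
  by exists (preimL I); rewrite // mem_cat map_f.
by exists (preimR I); rewrite // mem_cat map_f ?orbT.
Qed.

Definition seg_cover L : set R :=
  \big[setU/set0]_(I <- L) [set` `[(seg_meet I (0, 3)).1, (seg_meet I (0, 3)).2]%R].

Lemma seg_cover_measurable L : measurable (seg_cover L).
Proof. by apply: bigsetU_measurable => I _; apply: measurable_itv. Qed.

Lemma seg_cover_measure_le L :
  (lebesgue_measure (seg_cover L) <= (\sum_(I <- L) overlap I (0, 3))%:E)%E.
Proof.
elim: L => [|I L IH]; first by rewrite /seg_cover !big_nil measure0.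
rewrite /seg_cover !big_cons -/(seg_cover L) EFinD.
apply: le_trans (measureU2 _ _ _) _; [exact: measurable_itv|exact: seg_cover_measurable|].
apply: leeD => //; set J := seg_meet I (0, 3).
change (lebesgue_measure [set` `[J.1, J.2]%R] <= (overlap I (0, 3))%:E)%E.
rewrite lebesgue_measure_itv /= /overlap /seg_len -/J.
by case: ifP => _; rewrite lee_fin ?le_max ?lexx ?orbT.
Qed.

Lemma seg_cover_has L x : 0 <= x <= 3 -> has (in_seg x) L -> seg_cover L x.
Proof.
move=> x_itv; elim: L => [//|I L IH] /=; rewrite /seg_cover big_cons -/(seg_cover L).
case/orP => [xI|/IH]; [left|by right].
by rewrite /= in_itv /= -/(in_seg x (seg_meet I (0, 3))) in_seg_meet xI.
Qed.

Definition near1_cover j r := seg_cover (iter j preim_segs [:: (1 - r, 1 + r)]).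

Lemma near1_cover_measurable j r : measurable (near1_cover j r).
Proof. exact: seg_cover_measurable. Qed.

Lemma near1_cover_measure_le j r : 0 <= r ->
  (lebesgue_measure (near1_cover j r) <= (6 * r)%:E)%E.
Proof.
move=> r0; apply: le_trans (seg_cover_measure_le _) _; rewrite lee_fin.
apply: le_trans (sum_overlap_iter_preim _ _) _; rewrite big_seq1.
have : overlap (1 - r, 1 + r) (0, 3) <= 2 * r.
  by apply: le_trans (overlap_le_len _ _) _; rewrite ge_max /=; apply/andP; split; lra.
lra.
Qed.

Lemma near1_coverP j r x : 0 <= x <= 3 -> `|iter j T x - 1| <= r -> near1_cover j r x.
Proof.
move=> x_itv; rewrite ler_norml => /andP[? ?].
apply/seg_cover_has/has_in_seg_iter_preim => //=.
by rewrite /in_seg /= orbF; apply/andP; split; lra.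
Qed.

End invariant_density.

Section almost_every_orbit.
Variable R : realType.
Local Notation T := (@Tmap R).
Local Notation mu := (@lebesgue_measure R).

Lemma ae_orbit_eventually_far (rho : R) : 0 < rho < 1 ->
  {ae mu, forall x, 0 <= x <= 3 ->
    exists m, forall k, (m <= k)%N -> rho ^+ k < `|iter k T x - 1|}.
Proof.
move=> /andP[rho0 rho1]; pose F j := near1_cover j (rho ^+ j).
have rhoX_ge0 j : 0 <= rho ^+ j by rewrite exprn_ge0 // ltW.
exists (lim_sup_set F); split.
- by apply: bigcap_measurableType => n _; apply: bigcup_measurable => j _;
    apply: near1_cover_measurable.
- apply: lim_sup_set_cvg0 => [j|]; first exact: near1_cover_measurable.
  apply: (@le_lt_trans _ _ (\sum_(j <oo) (6 * rho ^+ j)%:E)%E).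
    by apply: lee_nneseries => // j _; apply: near1_cover_measure_le.
  apply: (@le_lt_trans _ _ (6 * (1 - rho)^-1)%:E); last by rewrite ltry.
  apply: lime_le; first by apply: is_cvg_nneseries => j _ _; rewrite lee_fin mulr_ge0.
  apply: nearW => n; rewrite sumEFin lee_fin.
  by apply: geometric_le_lim => //; rewrite ger0_norm // ltW.
- move=> x /= /not_implyP[x_itv /forallNP near_often] n _.
  move: (near_often n) => /existsNP[k /not_implyP[nk /negP]].
  by rewrite -leNgt => close; exists k => //; apply: near1_coverP.
Qed.

Lemma ae_orbit_avoids1 : {ae mu, forall x, 0 <= x <= 3 -> forall j, iter j T x != 1}.
Proof.
have avoid j : {ae mu, forall x, 0 <= x <= 3 -> iter j T x != 1}.
  exists (near1_cover j 0); split; first exact: near1_cover_measurable.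
    apply/eqP; rewrite eq_le measure_ge0 andbT.
    by have := near1_cover_measure_le j (lexx (0 : R)); rewrite mulr0.
  move=> x /= /not_implyP[x_itv /negP/negbNE/eqP hit].
  by apply: near1_coverP; rewrite // hit subrr normr0.
by apply: filterS (ae_foralln avoid) => x avoid_x x_itv j; apply: avoid_x.
Qed.

End almost_every_orbit.

Section log_ratio.
Variable R : realType.
Implicit Types (x t : R) (m k p : nat).
Local Notation T := (@Tmap R).

(* rate p = (2/3)^(1/(p+1)), a countable family of rates tending to 1. *)
Definition rate p : R := expR (- ln (3 / 2) / p.+1%:R).

Lemma ln32_gt0 : 0 < ln (3 / 2 : R).
Proof. by apply: ln_gt0; lra. Qed.

Lemma rate_itv p : 0 < rate p < 1.
Proof.
by rewrite expR_gt0 expR_lt1 /= mulNr oppr_lt0 divr_gt0 ?ln32_gt0.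
Qed.

Lemma ln_expansion k t : t != 0 ->
  ln ((3 / 2) ^+ k * `|t|) = k%:R * ln (3 / 2) + ln `|t|.
Proof.
move=> t0; rewrite lnM ?posrE ?normr_gt0 ?exprn_gt0 // lnXn; last lra.
by rewrite [k%:R * _]mulr_natl.
Qed.

Lemma kx_log_bounds x t p : 0 <= x <= 3 -> 0 <= x + t <= 3 -> t != 0 ->
  rate p ^+ kx x t < `|iter (kx x t) T x - 1| ->
  p.+1%:R * - ln `|t| < (p.+1%:R + 1) * ((kx x t)%:R * ln (3 / 2)) /\
  (kx x t)%:R * ln (3 / 2) <= - ln `|t| + ln 3.
Proof.
move=> x_itv xt_itv t0 far; set k := kx x t.
have expansion_gt0 : 0 < (3 / 2) ^+ k * `|t|.
  by rewrite mulr_gt0 ?normr_gt0 ?exprn_gt0 //; lra.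
have upper : k%:R * ln (3 / 2) + ln `|t| <= ln 3.
  by rewrite -ln_expansion // ler_ln ?posrE // kx_expansion_le3.
have lower : - (k%:R * ln (3 / 2)) / p.+1%:R < k%:R * ln (3 / 2) + ln `|t|.
  have -> : - (k%:R * ln (3 / 2)) / p.+1%:R = ln (rate p ^+ k).
    by rewrite /rate -expRM_natl expRK mulrA mulrN.
  have /andP[rate_gt0 _] := rate_itv p.
  rewrite -ln_expansion // ltr_ln ?posrE ?exprn_gt0 //.
  exact: lt_le_trans far (kx_dist1_le x_itv xt_itv t0).
have P_gt0 : 0 < p.+1%:R :> R by rewrite ltr0n.
split; last lra.
by move: lower; rewrite ltr_pdivrMr //; nra.
Qed.

Lemma near0_orbit_gap x m : (forall j, (j < m)%N -> iter j T x != 1) ->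
  \forall t \near (0 : R), forall j, (j < m)%N -> (3 / 2) ^+ j * `|t| < `|iter j T x - 1|.
Proof.
elim: m => [|m IH] avoid; first by near=> t.
have gap_gt0 : 0 < `|iter m T x - 1| / (3 / 2) ^+ m.
  by rewrite divr_gt0 ?normr_gt0 ?subr_eq0 ?avoid ?exprn_gt0 //; lra.
have pow_gt0 : 0 < (3 / 2 : R) ^+ m by rewrite exprn_gt0 //; lra.
have gap_lt := IH (fun j lt_jm => avoid j (ltnW lt_jm)).
near=> t => j; rewrite ltnS leq_eqVlt => /orP[/eqP ->|lt_jm].
  2: by move: j lt_jm; near: t; exact: gap_lt.
by rewrite [_ * `|t|]mulrC -ltr_pdivlMr //; near: t; apply: nbhs0_lt.
Unshelve. all: by end_near.
Qed.

Lemma near0_shift_itv x : 0 < x < 3 -> \forall t \near (0 : R), 0 <= x + t <= 3.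
Proof.
move=> /andP[x0 x3]; have margin_gt0 : 0 < Num.min x (3 - x) by rewrite lt_min x0 subr_gt0.
apply: filterS (nbhs0_lt margin_gt0) => t.
by rewrite lt_min !ltr_norml => /andP[/andP[? ?] /andP[? ?]]; apply/andP; split; lra.
Qed.

Lemma kx_ge_near0 x m : 0 < x < 3 -> (forall j, (j < m)%N -> iter j T x != 1) ->
  \forall t \near 0^', (m <= kx x t)%N.
Proof.
move=> x_itv avoid; have x_itv' : 0 <= x <= 3 by case/andP: x_itv => /ltW-> /ltW->.
near=> t.
have t0 : t != 0 by near: t; exact: nbhs_dnbhs_neq.
have xt_itv : 0 <= x + t <= 3 by near: t; apply: nbhs_dnbhs; exact: near0_shift_itv.
rewrite leqNgt; apply/negP => lt_km.
have := kx_dist1_le x_itv' xt_itv t0; rewrite leNgt => /negP; apply.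
by move: (kx x t) lt_km; near: t; apply: nbhs_dnbhs; exact: near0_orbit_gap.
Unshelve. all: by end_near.
Qed.

Lemma ratio_close1 (X s e P : R) : 0 < s -> 0 < P -> 1 <= e * (P + 1) ->
  P * s < (P + 1) * X -> X <= (1 + e) * s -> `|1 - X / s| <= e.
Proof.
move=> s_gt0 P_gt0 Pe lower upper.
have -> : 1 - X / s = (s - X) / s by field; rewrite gt_eqF.
rewrite normrM normfV (gtr0_norm s_gt0) ler_pdivrMr // ler_norml.
by apply/andP; split; nra.
Qed.

Lemma kx_log_ratio_cvg x :
  (forall p, 0 <= x <= 3 -> exists m, forall k, (m <= k)%N -> rate p ^+ k < `|iter k T x - 1|) ->
  (0 <= x <= 3 -> forall j, iter j T x != 1) -> x \in `]0, 3[ ->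
  ((kx x eps)%:R / (ln `|eps| / ln (2 / 3 : R))) @[eps --> 0^'] --> (1 : R).
Proof.
move=> far avoid; rewrite in_setE /= in_itv /= => x_itv.
have x_itv' : 0 <= x <= 3 by case/andP: x_itv => /ltW-> /ltW->.
apply/cvgrPdist_le => e e_gt0; pose p := Num.Def.archi_bound (1 / e).
have p_large : 1 / e < p%:R by apply: archi_boundP; rewrite divr_ge0 // ltW.
have [m far_m] := far p x_itv'.
near=> t.
have t0 : t != 0 by near: t; exact: nbhs_dnbhs_neq.
have xt_itv : 0 <= x + t <= 3 by near: t; apply: nbhs_dnbhs; exact: near0_shift_itv.
have t_lt1 : `|t| < 1 by near: t; apply: nbhs_dnbhs; exact: (nbhs0_lt (V := R) ltr01).
have t_small : `|t| < expR (- ln 3 / e).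
  by near: t; apply: nbhs_dnbhs; exact: (nbhs0_lt (V := R) (expR_gt0 _)).
have km : (m <= kx x t)%N by near: t; apply: kx_ge_near0 => // j _; apply: avoid.
have [lower upper] := kx_log_bounds x_itv' xt_itv t0 (far_m _ km).
have s_gt0 : 0 < - ln `|t| by rewrite oppr_gt0 ln_lt0 // normr_gt0 t0.
have ln3_small : ln 3 < e * - ln `|t|.
  rewrite -ltr_ln ?posrE ?normr_gt0 ?expR_gt0 // expRK in t_small.
  by move: t_small; rewrite ltr_pdivlMr //; nra.
have -> : (kx x t)%:R / (ln `|t| / ln (2 / 3)) = (kx x t)%:R * ln (3 / 2) / - ln `|t|.
  rewrite -[2 / 3]invf_div lnV ?posrE; last lra.
  by field; rewrite lt_eqF ?(gt_eqF ln32_gt0) // -oppr_gt0.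
apply: ratio_close1 s_gt0 _ _ lower _; first by rewrite ltr0n.
  by move: p_large; rewrite ltr_pdivrMr // -natr1; nra.
lra.
Unshelve. all: by end_near.
Qed.
End log_ratio.


Theorem lemma6p1 (R : realType) :
  {ae (@lebesgue_measure R), forall x : R, x \in `]0, 3[ ->
    ((kx x eps)%:R / (ln `|eps| / ln (2 / 3 : R))) @[eps --> 0^'] --> (1 : R)}.
Proof.
have far := ae_foralln (fun p => ae_orbit_eventually_far (rate_itv R p)).
by apply: filterS2 far (@ae_orbit_avoids1 R) => x; apply: kx_log_ratio_cvg.
Qed.
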